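(* Any (possibly randomized) online algorithm for the online degree-bounded Steiner tree problem has (multiplicative) competitive ratio $\Omega(\log n)$, where $n$ is the number of vertices; this holds already when $b_v=1$ for every vertex $v$. That is, there is an absolute constant $c>0$ such that for arbitrarily large $n$ and every online algorithm $A$ there exist a graph on $n$ vertices with all degree bounds equal to $1$, a root, and a terminal sequence such that the expected maximum degree of $A$'s output is at least $c\log n\cdot\mathrm{OPT}$.
   Context: Online degree-bounded Steiner tree: an undirected graph $G$, a root vertex, and degree bounds $b_v$ are given in advance; terminals arrive one by one, and upon arrival of each terminal the online algorithm must add edges (edges are never removed) so that every terminal seen so far is connected to the root. The load of $v$ in a subgraph $H$ is $\deg_H(v)/b_v$; the objective is to minimize the maximum load of the final subgraph. $\mathrm{OPT}$ is the minimum maximum load over all subgraphs connecting all the terminals to the root. The competitive ratio is the worst case of the (expected) maximum load of the algorithm's output divided by $\mathrm{OPT}$. *)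

From HB Require Import structures.
From mathcomp Require Import all_boot all_order all_algebra.
From mathcomp Require Import all_classical all_reals all_analysis.
Set Implicit Arguments. Unset Strict Implicit. Unset Printing Implicit Defensive.
Import Order.TTheory GRing.Theory Num.Theory.
Local Open Scope ring_scope.

(* Vertices of a graph on n vertices: 'I_n.  An undirected graph is a
   symmetric irreflexive relation G; an edge is the 2-element set {u,v}.
   A subgraph is a set of edges (a {set {set 'I_n}}). *)

Definition simple_graph n (G : rel 'I_n) : Prop :=
  symmetric G /\ irreflexive G.

Definition edges_of n (G : rel 'I_n) : {set {set 'I_n}} :=
  [set [set x.1; x.2] | x in [set x : 'I_n * 'I_n | G x.1 x.2]].

Definition adj n (H : {set {set 'I_n}}) : rel 'I_n :=
  fun x y => [set x; y] \in H.

Definition connects n (H : {set {set 'I_n}}) (r : 'I_n) (ts : seq 'I_n) : bool :=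
  all (connect (adj H) r) ts.

Definition deg n (H : {set {set 'I_n}}) (v : 'I_n) : nat :=
  #|[set e in H | v \in e]|.

Definition maxload (R : realType) n (H : {set {set 'I_n}}) (b : 'I_n -> nat) : R :=
  \big[Num.max/0]_(v : 'I_n) ((deg H v)%:R / (b v)%:R).

Definition feasible n (G : rel 'I_n) (r : 'I_n) (ts : seq 'I_n)
  (H : {set {set 'I_n}}) : bool :=
  (H \subset edges_of G) && connects H r ts.

(* The default value of the
   big min is the load of the whole graph, which is feasible (hence the min is
   the true optimum) whenever every terminal is connected to r in G. *)
Definition opt (R : realType) n (G : rel 'I_n) (r : 'I_n) (b : 'I_n -> nat)
  (ts : seq 'I_n) : R :=
  \big[Num.min/maxload R (edges_of G) b]_(H | feasible G r ts H) maxload R H b.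

(* A deterministic online algorithm on n-vertex instances: given the graph, root
   and degree bounds in advance, and the prefix s of terminals arrived so far,
   it returns the current subgraph (after processing the last terminal of s).
   Online-ness is built in: the answer depends only on the prefix. *)
Definition online_alg n :=
  rel 'I_n -> 'I_n -> ('I_n -> nat) -> seq 'I_n -> {set {set 'I_n}}.

Definition valid_alg n (A : online_alg n) : Prop :=
  forall G r b s,
    A G r b s \subset edges_of G /\
    (forall t, A G r b s \subset A G r b (rcons s t)) /\
    (connects (edges_of G) r s -> connects (A G r b s) r s).

(* A randomized online algorithm: a family of deterministic online algorithms
   indexed by the outcome w of a probability space, such that for each input the
   output is a random variable (measurable). *)
Definition measurable_alg d (Omega : measurableType d) n (A : Omega -> online_alg n)
  : Prop :=
  forall G r b s (H : {set {set 'I_n}}),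
    measurable [set w | A w G r b s = H].

(* The hard instance has 2^k servers, the bit strings of length k, joined in a
   path that starts at the root, and k 2^k terminals (j, u), j < k, the terminal
   (j, u) being adjacent to every server agreeing with u on the first j bits.
   For a hidden string s, phase j requests every terminal (j, u) with u agreeing
   with s on the first j bits.  Offline, each of them is attached to the server
   that agrees with u before position j and differs from s at position j, which
   gives maximum degree 4.  Online, the last edge into a terminal (j, u) comes
   from a server v agreeing with u on the first j bits, and up to phase j the
   input is the same for the hidden strings u and v; so, summed over the 2^k
   hidden strings s, each phase adds at least 2^k edges between the server s and
   its own terminals.  The server s thus has degree at least k on average over
   s, hence also in expectation for some fixed s whatever the random choices of
   the algorithm, while ln n = ln ((k + 1) 2^k) <= 3 k. *)

From HB Require Import structures.
From mathcomp Require Import all_boot all_order all_algebra.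
From mathcomp Require Import all_classical all_reals all_analysis.
From mathcomp Require Import zify lra.
Import Order.TTheory GRing.Theory Num.Theory measurable_realfun.

Set Implicit Arguments. Unset Strict Implicit. Unset Printing Implicit Defensive.

Lemma set2_eq (T : finType) (a b c d : T) :
  [set a; b] = [set c; d] -> (a = c /\ b = d) \/ (a = d /\ b = c).
Proof.
move=> E.
have /set2P Ha : a \in [set c; d] by rewrite -E set21.
have /set2P Hb : b \in [set c; d] by rewrite -E set22.
have /set2P Hc : c \in [set a; b] by rewrite E set21.
have /set2P Hd : d \in [set a; b] by rewrite E set22.
by case: Ha Hb Hc Hd => Ea [] Eb [] Ec [] Ed; subst; auto.
Qed.

Lemma connect_last_edge (T : finType) (e : rel T) r x :
  connect e r x -> x != r -> exists y, e y x.
Proof.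
case/connectP=> p; elim/last_ind: p => [|p y _] /=; first by move=> _ ->; rewrite eqxx.
by rewrite rcons_path last_rcons => /andP[_ ey] -> _; exists (last r p).
Qed.

Section Loads.
Variable n : nat.
Implicit Types (G : rel 'I_n) (H : {set {set 'I_n}}).

Lemma deg_gt0 H r x : connect (adj H) r x -> x != r -> (0 < deg H x)%N.
Proof.
move=> rx xr; have [y yx] := connect_last_edge rx xr.
by apply/card_gt0P; exists [set y; x]; rewrite inE -/(adj H y x) yx set22.
Qed.

Lemma deg_le_card_nbrs G H x : H \subset edges_of G ->
  (deg H x <= #|[set y | [set x; y] \in H]|)%N.
Proof.
move=> HG; apply: leq_trans (leq_imset_card (fun y => [set x; y]) _).
apply: subset_leq_card; apply/fintype.subsetP=> e; rewrite inE => /andP[eH xe].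
have /imsetP[[a b] _ /= Eab] := fintype.subsetP HG e eH; subst e.
case/set2P: xe eH => <- eH; apply/imsetP.
- by exists b; rewrite ?inE.
- by exists a; rewrite ?inE finset.setUC.
Qed.

Local Open Scope ring_scope.
Variable R : realType.

Lemma deg_le_maxload1 H v : (deg H v)%:R <= maxload R H (fun _ => 1%N).
Proof. by apply: le_trans (le_bigmax _ _ v); rewrite divr1. Qed.

Lemma maxload1_ge0 H : 0 <= maxload R H (fun _ => 1%N).
Proof.
by apply: (big_ind (fun x : R => 0 <= x)) => // x y x0 y0; rewrite le_max x0.
Qed.

Lemma maxload1_le H (c : nat) :
  (forall v, (deg H v <= c)%N) -> maxload R H (fun _ => 1%N) <= c%:R.
Proof. by move=> Hc; apply: bigmax_le => [|v _]; rewrite ?divr1 ?ler_nat. Qed.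

Lemma opt_gt0 G r ts t : connects (edges_of G) r ts -> t \in ts -> t != r ->
  0 < opt R G r (fun _ => 1%N) ts.
Proof.
move=> Gts tts tr.
have load_gt0 H : connects H r ts -> 0 < maxload R H (fun _ => 1%N).
  move=> /allP /(_ t tts) /deg_gt0 /(_ tr); rewrite -(ltr0n R) => dt.
  exact: lt_le_trans dt (deg_le_maxload1 H t).
by apply: lt_bigmin => [|H /andP[_]]; apply: load_gt0.
Qed.

End Loads.

Section Averaging.
Local Open Scope ring_scope.
Local Open Scope classical_set_scope.
Local Open Scope ereal_scope.
Context (R : realType) (d : measure_display) (Omega : measurableType d).

Lemma measurable_fun_finite_valued (T : finType) (h : Omega -> T) (g : T -> R) :
  (forall y, measurable [set w | h w = y]) ->
  measurable_fun [set: Omega] (EFin \o (g \o h)).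
Proof.
move=> mh _ Y mY.
have -> : [set: Omega] `&` (EFin \o (g \o h)) @^-1` Y =
    \bigcup_(y in [set y | Y (g y)%:E]) [set w | h w = y].
  apply/seteqP; split => w /=; first by move=> [_ Yw]; exists (h w).
  by move=> [y Yy hwy]; split => //=; rewrite hwy.
by apply: fin_bigcup_measurable; first exact: finite_finset.
Qed.

Lemma le_sum_integral (P : probability Omega R) (I : finType) (F : I -> Omega -> R) (L : R) :
  (forall i, measurable_fun [set: Omega] (EFin \o F i)) -> (forall i w, 0 <= F i w)%R ->
  (0 <= L)%R -> (forall w, L <= \sum_i F i w)%R ->
  L%:E <= \sum_i \int[P]_w (F i w)%:E.
Proof.
move=> mF F0 L0 FL.
rewrite -ge0_integral_sum //; last by move=> i w _; rewrite lee_fin.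
apply: le_trans (_ : \int[P]_w (cst L%:E w) <= _).
  by rewrite integral_cst //= probability_setT mule1.
apply: ge0_le_integral => //; first exact: emeasurable_sum.
by move=> w _; rewrite sumEFin lee_fin.
Qed.

Lemma exists_ge_average (I : finType) (i0 : I) (M : I -> \bar R) (x : R) :
  (x * #|I|%:R)%:E <= \sum_i M i -> exists i, x%:E <= M i.
Proof.
move=> S; pose imax := [arg max_(i > i0) M i]%O.
have Mmax j : M j <= M imax by rewrite /imax; case: arg_maxP => // i _; apply.
have Smax : (x * #|I|%:R)%:E <= M imax *+ #|I|.
  have -> : M imax *+ #|I| = \sum_(i : I) M imax by rewrite sumr_const.
  by apply: le_trans S _; apply: lee_sum => i _.
have [m cardI] : exists m, #|I| = m.+1.
  by exists #|I|.-1; rewrite prednK //; apply/card_gt0P; exists i0.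
exists imax; move: Smax; rewrite cardI; case: (M imax) => [r| |]; rewrite ?leey //.
- by rewrite -EFin_natmul lee_fin -[(r *+ _)%R]mulr_natr ler_pM2r ?ltr0n.
- by rewrite enatmul_ninfty leeNy_eq.
Qed.

End Averaging.

Lemma mem_take_enum_ord k i (j : 'I_k) : (j \in take i (enum 'I_k)) = (j < i)%N.
Proof. by rewrite in_take ?mem_enum // index_enum_ord. Qed.

Section HardInstance.
Variable k : nat.

Definition bits := {ffun 'I_k -> bool}.
Definition vertex := (bits + 'I_k * bits)%type.
Definition nvertex := #|{: vertex}|.

Definition vid (v : vertex) : 'I_nvertex := enum_rank v.
Definition vval (x : 'I_nvertex) : vertex := enum_val x.

Lemma vidK : cancel vid vval. Proof. exact: enum_rankK. Qed.
Lemma vvalK : cancel vval vid. Proof. exact: enum_valK. Qed.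
Lemma vid_inj : injective vid. Proof. exact: can_inj vidK. Qed.

Local Notation server s := (vid (inl s)).
Local Notation terminal j u := (vid (inr (j, u))).

Lemma terminal_neq_server j u s : terminal j u != server s.
Proof. by apply/eqP=> /vid_inj. Qed.

Lemma card_bits : #|{: bits}| = (2 ^ k)%N.
Proof. by rewrite card_ffun card_bool card_ord. Qed.

Lemma card_vertex : nvertex = (2 ^ k + k * 2 ^ k)%N.
Proof. by rewrite /nvertex card_sum card_prod card_ord card_bits. Qed.

Definition brank (u : bits) : nat := enum_rank u.

Lemma brank_inj : injective brank.
Proof. by move=> u v /val_inj /enum_rank_inj. Qed.

Lemma card_bits_gt0 : (0 < #|{: bits}|)%N.
Proof. by rewrite card_bits expn_gt0. Qed.

Definition bits0 : bits := enum_val (Ordinal card_bits_gt0).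

Lemma brank_bits0 : brank bits0 = 0%N.
Proof. by rewrite /brank /bits0 enum_valK. Qed.

Definition root : 'I_nvertex := server bits0.

Definition path_adj (u v : bits) : bool :=
  (brank v == (brank u).+1) || (brank u == (brank v).+1).

Lemma path_adj_sym : symmetric path_adj.
Proof. by move=> u v; rewrite /path_adj orbC. Qed.

Definition agree (j : 'I_k) (u v : bits) : bool :=
  [forall (i : 'I_k | (i < j)%N), u i == v i].

Lemma agree_refl j u : agree j u u.
Proof. by apply/forallP=> i; rewrite eqxx implybT. Qed.

Lemma agree_sym j u v : agree j u v = agree j v u.
Proof. by apply/forallP/forallP=> uv i; rewrite eq_sym; apply: uv. Qed.

Lemma agree_trans j u v w : agree j u v -> agree j v w -> agree j u w.
Proof.
move=> /forallP uv /forallP vw; apply/forallP=> i; apply/implyP=> ij.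
by rewrite (eqP (implyP (uv i) ij)) (implyP (vw i) ij).
Qed.

Lemma agree_le (j j' : 'I_k) u v : (j' <= j)%N -> agree j u v -> agree j' u v.
Proof.
move=> le_j /forallP uv; apply/forallP=> i; apply/implyP=> ij.
exact: (implyP (uv i) (leq_trans ij le_j)).
Qed.

Definition hard_adj (a b : vertex) : bool :=
  match a, b with
  | inl u, inl v => path_adj u v
  | inl v, inr (j, u) | inr (j, u), inl v => agree j v u
  | _, _ => false
  end.

Definition hard_graph : rel 'I_nvertex := fun x y => hard_adj (vval x) (vval y).

Lemma hard_adj_sym : symmetric hard_adj.
Proof. by case=> [u|[j u]] [v|[j' v]] //=; rewrite path_adj_sym. Qed.

Lemma hard_graph_simple : simple_graph hard_graph.
Proof.
split=> [x y|x]; first by rewrite /hard_graph hard_adj_sym.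
rewrite /hard_graph; case: (vval x) => [u|[j u]] //=.
by rewrite /path_adj orbb eqn_leq ltnn andbF.
Qed.

Lemma hard_adj_edge a b : hard_adj a b -> [set vid a; vid b] \in edges_of hard_graph.
Proof.
by move=> ab; apply/imsetP; exists (vid a, vid b); rewrite // inE /hard_graph /= !vidK.
Qed.

Definition phase (j : 'I_k) (s : bits) : seq 'I_nvertex :=
  [seq terminal j u | u <- enum [pred u | agree j u s]].

Definition terminals_upto (i : nat) (s : bits) : seq 'I_nvertex :=
  flatten [seq phase j s | j <- take i (enum 'I_k)].

Definition terminals (s : bits) : seq 'I_nvertex := terminals_upto k s.

Lemma mem_terminals_upto i s x : x \in terminals_upto i s ->
  exists j u, [/\ x = terminal j u, agree j u s & (j < i)%N].
Proof.
case/flatten_mapP=> j; rewrite mem_take_enum_ord => ji /mapP[u].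
by rewrite mem_enum inE => us ->; exists j, u.
Qed.

Lemma terminal_in_upto j u s : agree j u s -> terminal j u \in terminals_upto j.+1 s.
Proof.
move=> us; apply/flatten_mapP; exists j; first by rewrite mem_take_enum_ord.
by apply/mapP; exists u; rewrite // mem_enum inE.
Qed.

Lemma terminals_upto_prefix i s : exists t, terminals s = terminals_upto i s ++ t.
Proof.
exists (flatten [seq phase j s | j <- drop i (enum 'I_k)]).
rewrite /terminals /terminals_upto -flatten_cat -map_cat cat_take_drop.
by rewrite take_oversize // size_enum_ord.
Qed.

Lemma terminals_upto_agree (j : 'I_k) s s' :
  agree j s s' -> terminals_upto j.+1 s = terminals_upto j.+1 s'.
Proof.
move=> ss'; rewrite /terminals_upto; congr flatten; apply/eq_in_map => j'.
rewrite mem_take_enum_ord ltnS => le_j; congr map; apply: eq_enum => u.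
rewrite !inE; apply/idP/idP=> us; apply: agree_trans us _;
  [|rewrite agree_sym]; exact: agree_le le_j ss'.
Qed.

Lemma terminal0_in (k_gt0 : (0 < k)%N) s : terminal (Ordinal k_gt0) s \in terminals s.
Proof.
have [t ->] := terminals_upto_prefix 1 s.
by rewrite mem_cat (terminal_in_upto (agree_refl _ _)).
Qed.

Definition opt_server (s : bits) (j : 'I_k) (u : bits) : bits :=
  [ffun i => if i == j then ~~ s j else u i].

Definition opt_adj (s : bits) (a b : vertex) : bool :=
  match a, b with
  | inl u, inl v => path_adj u v
  | inr (j, u), inl v | inl v, inr (j, u) => agree j u s && (v == opt_server s j u)
  | _, _ => false
  end.

Definition opt_tree (s : bits) : {set {set 'I_nvertex}} :=
  [set [set vid ab.1; vid ab.2] | ab in [set ab : vertex * vertex | opt_adj s ab.1 ab.2]].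

Lemma opt_adj_sym s : symmetric (opt_adj s).
Proof. by case=> [u|[j u]] [v|[j' v]] //=; rewrite path_adj_sym. Qed.

Lemma agree_opt_server s j u : agree j (opt_server s j u) u.
Proof.
apply/forallP=> i; apply/implyP=> ij; rewrite ffunE.
by rewrite ifN // neq_ltn ij.
Qed.

Lemma opt_adj_hard s a b : opt_adj s a b -> hard_adj a b.
Proof.
case: a b => [u|[j u]] [v|[j' v]] //=; case/andP=> _ /eqP ->; exact: agree_opt_server.
Qed.

Lemma opt_tree_edge s a b : opt_adj s a b -> [set vid a; vid b] \in opt_tree s.
Proof. by move=> ab; apply/imsetP; exists (a, b); rewrite ?inE. Qed.

Lemma opt_tree_sub s : opt_tree s \subset edges_of hard_graph.
Proof.
apply/fintype.subsetP=> e /imsetP[[a b]]; rewrite inE /= => ab ->.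
exact: hard_adj_edge (opt_adj_hard ab).
Qed.

Lemma connect_root_server (H : {set {set 'I_nvertex}}) :
  (forall u v, path_adj u v -> [set server u; server v] \in H) ->
  forall v, connect (adj H) root (server v).
Proof.
move=> Hpath v; elim: {v}(brank v) {-2}v (erefl (brank v)) => [|m IHm] v rv.
  by rewrite /root (brank_inj (etrans rv (esym brank_bits0))).
have m_lt : (m < #|{: bits}|)%N by apply: ltnW; rewrite -rv; exact: ltn_ord.
pose w := enum_val (Ordinal m_lt).
have rw : brank w = m by rewrite /brank /w enum_valK.
apply: connect_trans (IHm w rw) (connect1 _).
by apply: Hpath; rewrite /path_adj rw rv eqxx.
Qed.

Lemma connects_terminals_upto s (H : {set {set 'I_nvertex}}) :
  (forall a b, opt_adj s a b -> [set vid a; vid b] \in H) ->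
  forall i, connects H root (terminals_upto i s).
Proof.
move=> Hopt i; apply/allP=> x /mem_terminals_upto[j [u [-> us _]]].
have Hpath u' v : path_adj u' v -> [set server u'; server v] \in H by move=> uv; apply: Hopt.
apply: connect_trans (connect_root_server Hpath (opt_server s j u)) (connect1 _).
by apply: Hopt; rewrite /= us eqxx.
Qed.

Lemma opt_tree_feasible s : feasible hard_graph root (terminals s) (opt_tree s).
Proof.
by rewrite /feasible opt_tree_sub; apply: connects_terminals_upto => a b; apply: opt_tree_edge.
Qed.

Lemma hard_graph_connects s i : connects (edges_of hard_graph) root (terminals_upto i s).
Proof.
by apply: connects_terminals_upto => a b ab; apply: hard_adj_edge (opt_adj_hard ab).
Qed.

Lemma opt_server_inj s j j' u u' : agree j u s -> agree j' u' s ->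
  opt_server s j u = opt_server s j' u' -> u j = u' j' -> j = j' /\ u = u'.
Proof.
have first_diff (j1 j2 : 'I_k) u1 u2 : agree j2 u2 s -> (j1 < j2)%N ->
    opt_server s j1 u1 != opt_server s j2 u2.
  move=> /forallP u2s lt12; apply/eqP=> /(congr1 (fun f : bits => f j1)).
  rewrite !ffunE eqxx ifN ?neq_ltn ?lt12 // (eqP (implyP (u2s j1) lt12)).
  by case: (s j1).
move=> us u's E uj; have jj' : j = j'.
  case: (ltngtP j j') => [lt|lt|/val_inj //].
  - by case/eqP: (first_diff _ _ u _ u's lt).
  - by case/eqP: (first_diff _ _ u' _ us lt).
subst j'; split=> //; apply/ffunP=> i; case: (eqVneq i j) => [->//|ne].
by have := congr1 (fun f : bits => f i) E; rewrite !ffunE (negbTE ne).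
Qed.

Lemma card_opt_nbrs s a : (#|[set b | opt_adj s a b]| <= 4)%N.
Proof.
case: a => [w|[j u]]; last first.
  apply: leq_trans (_ : #|[set inl (opt_server s j u) : vertex]| <= 4)%N; last by rewrite cards1.
  apply: subset_leq_card; apply/fintype.subsetP=> v; rewrite !inE.
  by case: v => [v|[j' v]] //= /andP[_ /eqP ->].
(* A neighbour of the server w is determined by whether it follows w on the path
   or, for a terminal (j, u), by the bit u j. *)
pose code (v : vertex) : bool * bool :=
  match v with inl v => (false, (brank w < brank v)%N) | inr (j, u) => (true, u j) end.
rewrite -(@card_in_imset _ _ code); last first.
  move=> [v|[j u]] [v'|[j' u']]; rewrite !inE //=.
  - move=> wv wv' [] E; congr inl; apply: brank_inj.
    by move: wv wv' E; rewrite /path_adj => /orP[] /eqP ? /orP[] /eqP ?; lia.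
  - case/andP=> us /eqP E; case/andP=> u's /eqP E' [] uj.
    by have [-> ->] := opt_server_inj us u's (etrans (esym E) E') uj.
by apply: leq_trans (max_card _) _; rewrite card_prod card_bool.
Qed.

Lemma deg_opt_tree s x : (deg (opt_tree s) x <= 4)%N.
Proof.
apply: leq_trans (deg_le_card_nbrs x (opt_tree_sub s)) _.
apply: leq_trans (card_opt_nbrs s (vval x)).
rewrite -(card_imset _ (can_inj vvalK)); apply: subset_leq_card.
apply/fintype.subsetP=> _ /imsetP[y + ->]; rewrite !inE => /imsetP[[a b]].
rewrite inE /= => ab /set2_eq[[-> ->]|[-> ->]]; rewrite !vidK //.
by rewrite opt_adj_sym.
Qed.

Section OnlineAlgorithm.
Variables (A : online_alg nvertex) (b : 'I_nvertex -> nat).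
Hypothesis A_valid : valid_alg A.

Let alg (t : seq 'I_nvertex) := A hard_graph root b t.

Lemma alg_sub_cat t t' : alg t \subset alg (t ++ t').
Proof.
elim/last_ind: t' => [|t' x IHt']; first by rewrite cats0.
by rewrite -rcons_cat; apply: fintype.subset_trans IHt' (proj1 (proj2 (A_valid _ _ _ _)) _).
Qed.

Definition charged (j : 'I_k) (s u : bits) : bool :=
  agree j u s && ([set terminal j u; server s] \in alg (terminals_upto j.+1 s)).

Lemma sum_charged_le_deg s :
  (\sum_(j : 'I_k) #|[set u | charged j s u]| <= deg (alg (terminals s)) (server s))%N.
Proof.
have -> : (\sum_(j : 'I_k) #|[set u | charged j s u]|
           = #|[set p : 'I_k * bits | charged p.1 s p.2]|)%N.
  rewrite -sum1dep_card -(pair_big_dep xpredT (fun j u => charged j s u) (fun _ _ => 1%N)).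
  by apply: eq_bigr => j _; rewrite sum1dep_card.
pose edge (p : 'I_k * bits) := [set vid (inr p); server s].
have edge_inj : injective edge.
  move=> p q /set2_eq[[/vid_inj [] -> //]|[E _]].
  by move: (terminal_neq_server p.1 p.2 s); rewrite -surjective_pairing E eqxx.
rewrite -(card_imset _ edge_inj); apply: subset_leq_card.
apply/fintype.subsetP=> _ /imsetP[[j u] + ->]; rewrite inE => /andP[_ jus].
rewrite inE set22 andbT; have [t ->] := terminals_upto_prefix j.+1 s.
exact: fintype.subsetP (alg_sub_cat _ _) _ jus.
Qed.

Lemma charged_exists j u : exists s, charged j s u.
Proof.
have [Asub [_ Aconn]] := A_valid hard_graph root b (terminals_upto j.+1 u).
have /allP /(_ _ (terminal_in_upto (agree_refl j u))) ru :=
  Aconn (hard_graph_connects u j.+1).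
have [y yu] := connect_last_edge ru (terminal_neq_server j u bits0).
have /imsetP[[a c] + /set2_eq Eac] := fintype.subsetP Asub _ yu; rewrite inE /= => ac.
have : hard_graph y (terminal j u).
  by case: Eac => [[-> ->]|[-> ->]] //; rewrite /hard_graph hard_adj_sym.
rewrite /hard_graph vidK; case Ey: (vval y) => [v|[? ?]] //= vu.
exists v; rewrite /charged agree_sym vu (terminals_upto_agree vu) /=.
by rewrite finset.setUC -Ey vvalK.
Qed.

Lemma sum_charged_ge j : (2 ^ k <= \sum_(s : bits) #|[set u | charged j s u]|)%N.
Proof.
under eq_bigr => s _ do rewrite -sum1dep_card big_mkcond /=.
rewrite exchange_big /= -card_bits -sum1_card; apply: leq_sum => u _.
have [s jsu] := charged_exists j u.
by rewrite (bigD1 s) //= jsu.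
Qed.

Lemma sum_deg_servers_ge :
  (k * 2 ^ k <= \sum_(s : bits) deg (alg (terminals s)) (server s))%N.
Proof.
apply: leq_trans (_ : \sum_(s : bits) \sum_(j : 'I_k) #|[set u | charged j s u]| <= _)%N;
  last by apply: leq_sum => s _; apply: sum_charged_le_deg.
rewrite exchange_big.
apply: leq_trans (_ : \sum_(j : 'I_k) 2 ^ k <= _)%N; first by rewrite sum_nat_const card_ord.
by apply: leq_sum => j _; apply: sum_charged_ge.
Qed.

End OnlineAlgorithm.

End HardInstance.

Arguments hard_graph : clear implicits.

Local Open Scope ring_scope.

Lemma randomized_lower_bound (R : realType) k (d : measure_display)
    (Omega : measurableType d) (P : probability Omega R) (A : Omega -> online_alg (nvertex k)) :
  (forall w, valid_alg (A w)) -> measurable_alg A ->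
  exists s : bits k, (k%:R%:E <= \int[P]_w
    (maxload R (A w (hard_graph k) (root k) (fun _ => 1%N) (terminals s)) (fun _ => 1%N))%:E)%E.
Proof.
move=> A_valid A_meas; apply: (exists_ge_average (bits0 k)).
apply: le_sum_integral => [s|s w||w].
- apply: (measurable_fun_finite_valued (fun H => maxload R H (fun _ => 1%N))
    (h := fun w => A w (hard_graph k) (root k) (fun _ => 1%N) (terminals s))).
  exact: A_meas.
- exact: maxload1_ge0.
- by rewrite mulr_ge0.
- rewrite card_bits -natrM; apply: le_trans (_ : (\sum_(s : bits k)
      deg (A w (hard_graph k) (root k) (fun _ => 1%N) (terminals s)) (vid (inl s)))%:R <= _).
    by rewrite ler_nat; apply: sum_deg_servers_ge.
  by rewrite natr_sum; apply: ler_sum => s _; apply: deg_le_maxload1.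
Qed.

Lemma opt_hard_le (R : realType) k (s : bits k) :
  opt R (hard_graph k) (root k) (fun _ => 1%N) (terminals s) <= 4%:R.
Proof.
apply: le_trans (bigmin_le_cond _ _ (opt_tree_feasible s)) _.
exact: maxload1_le (deg_opt_tree s).
Qed.

Lemma opt_hard_gt0 (R : realType) k (k_gt0 : (0 < k)%N) (s : bits k) :
  0 < opt R (hard_graph k) (root k) (fun _ => 1%N) (terminals s).
Proof.
exact: opt_gt0 (hard_graph_connects s k) (terminal0_in k_gt0 s) (terminal_neq_server _ _ _).
Qed.

Lemma ln_nvertex_le (R : realType) k : ln ((nvertex k)%:R : R) <= 3 * k%:R.
Proof.
have n_le : (nvertex k <= 4 ^ k)%N.
  rewrite card_vertex -[X in (X + _)%N]mul1n -mulnDl add1n.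
  have -> : (4 ^ k = 2 ^ k * 2 ^ k)%N by rewrite -expnMn.
  by rewrite leq_mul2r ltn_expl ?orbT.
have n_gt0 : (0 < nvertex k)%N by rewrite card_vertex addn_gt0 expn_gt0.
apply: le_trans (_ : ln ((4 : R) ^+ k) <= _).
  by rewrite ler_ln ?posrE ?ltr0n ?exprn_gt0 // -natrX ler_nat.
rewrite lnXn // mulr_natr lerMn2r; apply/orP; right.
by rewrite [4 : R]/(1 + 3); apply: le_ln1Dx; lra.
Qed.

Theorem theorem2 (R : realType) :
  exists c : R, 0 < c /\
  forall N : nat, exists n : nat, (N <= n)%N /\
  forall (d : measure_display) (Omega : measurableType d)
         (P : probability Omega R) (A : Omega -> online_alg n),
    (forall w, valid_alg (A w)) -> measurable_alg A ->
    exists (G : rel 'I_n) (r : 'I_n) (ts : seq 'I_n),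
      simple_graph G /\ connects (edges_of G) r ts /\
      0 < opt R G r (fun _ => 1%N) ts /\
      ((c * ln n%:R * opt R G r (fun _ => 1%N) ts)%:E
         <= \int[P]_w (maxload R (A w G r (fun _ => 1%N) ts) (fun _ => 1%N))%:E)%E.
Proof.
exists 12^-1; split=> // N; pose k := N.+1.
exists (nvertex k); split.
  by rewrite card_vertex; have := expn_gt0 2 k; nia.
move=> d Omega P A A_valid A_meas.
have [s lower] := randomized_lower_bound P A_valid A_meas.
have opt_pos := opt_hard_gt0 R (ltn0Sn N) s.
exists (hard_graph k), (root k), (terminals s).
split; [exact: hard_graph_simple | split; [exact: hard_graph_connects | split=> //]].
apply: le_trans lower; rewrite lee_fin.
have ln_n_ge0 : 0 <= ln ((nvertex k)%:R : R).
  by rewrite ln_ge0 // ler1n card_vertex addn_gt0 expn_gt0.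
have := ler_pM ln_n_ge0 (ltW opt_pos) (ln_nvertex_le R k) (opt_hard_le R s).
lra.
Qed.
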